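(* Let $N\ge2$. There does not exist any pure $(N-1)$-DI qubit assemblage $\sigma^{\mathrm{bit}}_{\boldsymbol a|\boldsymbol x}=P_{\boldsymbol A|\boldsymbol X}(\boldsymbol a|\boldsymbol x)\,|\psi(\boldsymbol a,\boldsymbol x)\rangle\langle\psi(\boldsymbol a,\boldsymbol x)|$, with $\boldsymbol a=(a_1,\dots,a_{N-1})$ and $\boldsymbol x=(x_1,\dots,x_{N-1})$ ranging over finite sets, that can be transformed via 1W-LOCCs into every qubit assemblage of minimal dimension $\{\sigma^{(\mathrm{target})}_{a|x}\}_{a,x\in\{0,1\}}$.
   Context: A pure $(N-1)$-DI qubit assemblage consists of a conditional probability distribution $P_{\boldsymbol A|\boldsymbol X}(\boldsymbol a|\boldsymbol x)$ of the outputs $\boldsymbol a$ of $N-1$ untrusted parties given their inputs $\boldsymbol x$, and unit vectors $|\psi(\boldsymbol a,\boldsymbol x)\rangle\in\mathbb C^2$ of a trusted party, such that no-signaling holds between the trusted party and the untrusted ones: $\sum_{\boldsymbol a}\sigma^{\mathrm{bit}}_{\boldsymbol a|\boldsymbol x}$ is independent of $\boldsymbol x$ (the untrusted parties may signal among themselves). A qubit assemblage of minimal dimension is a family $\{\sigma_{a|x}\}_{a,x\in\{0,1\}}$ of positive semidefinite operators on $\mathbb C^2$ with $\sum_a\sigma_{a|x}$ a density operator independent of $x$. A 1W-LOCC (one-way local operation with classical communication from the trusted to the untrusted parties) maps $\sigma^{\mathrm{bit}}$ to the assemblage $\sigma'_{a_f|x_f}=\sum_{\boldsymbol a,\boldsymbol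 x,\omega}P_{\boldsymbol X|X_f,\Omega}(\boldsymbol x|x_f,\omega)\,P_{A_f|\boldsymbol A,\boldsymbol X,\Omega,X_f}(a_f|\boldsymbol a,\boldsymbol x,\omega,x_f)\,P_{\boldsymbol A|\boldsymbol X}(\boldsymbol a|\boldsymbol x)\,K_\omega|\psi(\boldsymbol a,\boldsymbol x)\rangle\langle\psi(\boldsymbol a,\boldsymbol x)|K_\omega^\dagger$, where $\{K_\omega\}$ are the Kraus operators (acting on $\mathbb C^2$) of a quantum instrument on the trusted party whose classical outcome $\omega$ is communicated to the untrusted parties, and $P_{\boldsymbol X|X_f,\Omega}$, $P_{A_f|\boldsymbol A,\boldsymbol X,\Omega,X_f}$ are conditional probability distributions (classical pre- and post-processing), with $a_f,x_f\in\{0,1\}$. *)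

From HB Require Import structures.
From mathcomp Require Import all_boot all_algebra.
From mathcomp.real_closed Require Import complex.
From mathcomp Require Import reals Rstruct.
Set Implicit Arguments. Unset Strict Implicit. Unset Printing Implicit Defensive.
Import GRing.Theory Num.Theory.
Local Open Scope ring_scope.

Definition C : numClosedFieldType := Rdefinitions.R[i].

Definition adj (m n : nat) (M : 'M[C]_(m, n)) : 'M[C]_(n, m) := (map_mx Num.conj M)^T.

Definition proj (psi : 'cV[C]_2) : 'M[C]_2 := psi *m adj psi.

Definition unit_vector (psi : 'cV[C]_2) : Prop := (adj psi *m psi) 0 0 = 1.

(* positive semidefinite operator on C^2 (over C this implies hermitian) *)
Definition psd (M : 'M[C]_2) : Prop := forall v : 'cV[C]_2, 0 <= (adj v *m M *m v) 0 0.

Definition density (M : 'M[C]_2) : Prop := psd M /\ \tr M = 1.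

Definition cond_prob (Y : Type) (D : finType) (p : Y -> D -> C) : Prop :=
  (forall y d, 0 <= p y d) /\ (forall y, \sum_(d : D) p y d = 1).

(* Joint inputs x = (x_1,...,x_{N-1}) and outputs a = (a_1,...,a_{N-1}) of the
   N-1 untrusted parties; party i has inputs in 'I_(mx i) and outputs in 'I_(ma i). *)
Definition inputs (n : nat) (mx : 'I_n -> nat) : finType :=
  {dffun forall i : 'I_n, 'I_(mx i)}.
Definition outputs (n : nat) (ma : 'I_n -> nat) : finType :=
  {dffun forall i : 'I_n, 'I_(ma i)}.

Definition pure_DI_assemblage (X A : finType)
    (P : X -> A -> C) (psi : A -> X -> 'cV[C]_2) : Prop :=
  cond_prob P /\
  (forall a x, unit_vector (psi a x)) /\
  (forall x x', \sum_(a : A) P x a *: proj (psi a x)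
              = \sum_(a : A) P x' a *: proj (psi a x')).

Definition min_qubit_assemblage (sigma : bool -> bool -> 'M[C]_2) : Prop :=
  (forall a x, psd (sigma a x)) /\
  (forall x x', \sum_(a : bool) sigma a x = \sum_(a : bool) sigma a x') /\
  (forall x, density (\sum_(a : bool) sigma a x)).

Definition instrument (W : finType) (K : W -> 'M[C]_2) : Prop :=
  \sum_(w : W) adj (K w) *m K w = 1%:M.

Definition one_way_LOCC_image (X A W : finType)
    (P : X -> A -> C) (psi : A -> X -> 'cV[C]_2) (K : W -> 'M[C]_2)
    (Pre : W * bool -> X -> C) (Post : A * X * W * bool -> bool -> C)
    (af xf : bool) : 'M[C]_2 :=
  \sum_(a : A) \sum_(x : X) \sum_(w : W)
     (Pre (w, xf) x * Post (a, x, w, xf) af * P x a) *: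
       (K w *m proj (psi a x) *m adj (K w)).

Definition LOCC_reachable (X A : finType)
    (P : X -> A -> C) (psi : A -> X -> 'cV[C]_2) (sigma : bool -> bool -> 'M[C]_2) : Prop :=
  exists (W : finType) (K : W -> 'M[C]_2)
         (Pre : W * bool -> X -> C) (Post : A * X * W * bool -> bool -> C),
    instrument K /\ cond_prob Pre /\ cond_prob Post /\
    forall af xf, one_way_LOCC_image P psi K Pre Post af xf = sigma af xf.

(* Fix c, s > 0 with c^2 + s^2 = 1 and let the target be
   sigma_{a|x} = 1/2 |v_{a,x}><v_{a,x}|, where v_{.,0} is the computational
   basis and v_{.,1} the basis rotated by (c, s).  If a 1W-LOCC reaches it,
   positivity forces each Kraus operator K_w to send every state psi(a,x)
   feeding the output (a_f, x_f) onto a multiple of v_{a_f,x_f}.  No-signalling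
   of the pure assemblage, together with the fact that no overlap between the
   two bases vanishes, gives one outcome w feeding all four outputs.  The cross
   ratio of four points of the projective line is invariant under invertible
   maps and rescalings, so some quadruple of states psi(a,x) has cross ratio
   -(s/c)^2.  As s/c ranges over 1, 2, 3, ... this produces infinitely many
   distinct cross ratios from the finitely many quadruples. *)

From mathcomp Require Import all_boot all_algebra.
From mathcomp Require Import ring.
From mathcomp.real_closed Require Import complex.
From mathcomp Require Import reals Rstruct.
Set Implicit Arguments. Unset Strict Implicit. Unset Printing Implicit Defensive.
Import GRing.Theory Num.Theory.
Local Open Scope ring_scope.

Lemma det_mx22 (R : comPzRingType) (M : 'M[R]_2) :
  \det M = M 0 0 * M 1 1 - M 0 1 * M 1 0.
Proof.
rewrite (expand_det_row _ 0) !big_ord_recl big_ord0 addr0 /cofactor.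
rewrite ![\det _]det_mx11 !mxE /= expr0 expr1 !mul1r mulN1r mulrN.
by congr (_ * M _ _ - M _ _ * M _ _); apply: val_inj.
Qed.

Lemma ord2P (i : 'I_2) : i = 0 \/ i = 1.
Proof. by case: i => [[|[|//]] ?]; [left | right]; apply: val_inj. Qed.

Implicit Types (u v phi : 'cV[C]_2) (K M : 'M[C]_2).

Lemma adjM m n p (A : 'M[C]_(m, n)) (B : 'M[C]_(n, p)) :
  adj (A *m B) = adj B *m adj A.
Proof. by rewrite /adj map_mxM trmx_mul. Qed.

Lemma adjK m n (A : 'M[C]_(m, n)) : adj (adj A) = A.
Proof. by apply/matrixP => i j; rewrite !mxE conjCK. Qed.

Definition dotv u v : C := (adj u *m v) 0 0.

Definition form u M : C := (adj u *m M *m u) 0 0.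

Lemma dotvE u v : dotv u v = (u 0 0)^* * v 0 0 + (u 1 0)^* * v 1 0.
Proof.
rewrite /dotv mxE big_ord_recl big_ord1 !mxE.
by congr (_ + (u _ _)^* * v _ _); apply: val_inj.
Qed.

Lemma dotvC u v : dotv v u = (dotv u v)^*.
Proof. by rewrite /dotv -[adj v *m u]adjK adjM adjK /adj !mxE. Qed.

Lemma dotvZ u k v : dotv u (k *: v) = k * dotv u v.
Proof. by rewrite /dotv -scalemxAr mxE. Qed.

Lemma dotv_mul u K v : dotv u (K *m v) = dotv (adj K *m u) v.
Proof. by rewrite /dotv adjM adjK mulmxA. Qed.

Lemma proj_mulmx u phi : proj u *m phi = dotv u phi *: u.
Proof. by rewrite /proj -mulmxA [adj u *m phi]mx11_scalar mul_mx_scalar. Qed.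

Lemma proj_entry v i j : proj v i j = v i 0 * (v j 0)^*.
Proof. by rewrite /proj mxE big_ord1 !mxE. Qed.

Lemma mulmx_proj K v : K *m proj v *m adj K = proj (K *m v).
Proof. by rewrite /proj adjM !mulmxA. Qed.

Lemma form_proj u v : form u (proj v) = `|dotv u v| ^+ 2.
Proof.
rewrite /form /proj !mulmxA -(mulmxA (adj u *m v)) [adj u *m v]mx11_scalar.
by rewrite mul_scalar_mx mxE normCK -dotvC.
Qed.

Lemma form_sum (I : finType) u (F : I -> 'M[C]_2) :
  form u (\sum_i F i) = \sum_i form u (F i).
Proof. by rewrite /form mulmx_sumr mulmx_suml summxE. Qed.

Lemma formZ u k M : form u (k *: M) = k * form u M.
Proof. by rewrite /form -scalemxAr -scalemxAl mxE. Qed.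

Lemma psd_proj v : psd (proj v).
Proof. by move=> u; rewrite -/(form u _) form_proj exprn_ge0. Qed.

Lemma psdZ k M : 0 <= k -> psd M -> psd (k *: M).
Proof. by move=> k_ge0 psdM u; rewrite -/(form u _) formZ mulr_ge0 ?psdM. Qed.

Lemma psd_sum (I : finType) (F : I -> 'M[C]_2) :
  (forall i, psd (F i)) -> psd (\sum_i F i).
Proof.
by move=> psdF u; rewrite -/(form u _) form_sum sumr_ge0 // => i _; apply: psdF.
Qed.

Lemma orthonormal_expansion u u' phi :
  proj u + proj u' = 1%:M -> dotv u' phi = 0 -> phi = dotv u phi *: u.
Proof.
move=> complete orth.
by rewrite -[phi in LHS]mul1mx -complete mulmxDl !proj_mulmx orth scale0r addr0.
Qed.

Definition ket (p q : C) : 'cV[C]_2 := \col_i (if i == 0 then p else q).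

Lemma dotv_ket p q p' q' : dotv (ket p q) (ket p' q') = p^* * p' + q^* * q'.
Proof. by rewrite dotvE !mxE. Qed.

Definition rot_basis (p q : C) (b : bool) : 'cV[C]_2 :=
  if b then ket (- q) p else ket p q.

Section RotatedBasis.
Variables p q : C.
Hypotheses (p_real : p \is Num.real) (q_real : q \is Num.real)
  (pq1 : p ^+ 2 + q ^+ 2 = 1).

Lemma rot_basis_orthonormal b b' :
  dotv (rot_basis p q b) (rot_basis p q b') = (b == b')%:R.
Proof.
case: b; case: b'; rewrite /= dotv_ket ?rmorphN /= !conj_Creal // -pq1; ring.
Qed.

Lemma rot_basis_complete :
  proj (rot_basis p q false) + proj (rot_basis p q true) = 1%:M.
Proof.
apply/matrixP => i j; rewrite [LHS]mxE !proj_entry [RHS]mxE !mxE.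
have [-> | ->] := ord2P i; have [-> | ->] := ord2P j;
  rewrite /= ?rmorphN /= !conj_Creal // -?pq1; ring.
Qed.

End RotatedBasis.

Definition det2 (u v : 'cV[C]_2) : C := u 0 0 * v 1 0 - u 1 0 * v 0 0.

Lemma mulmx_col2 K v i : (K *m v) i 0 = K i 0 * v 0 0 + K i 1 * v 1 0.
Proof.
rewrite mxE big_ord_recl big_ord1.
by congr (_ + K _ _ * v _ _); apply: val_inj.
Qed.

Lemma det2_mul K u v : det2 (K *m u) (K *m v) = \det K * det2 u v.
Proof. by rewrite /det2 det_mx22 !mulmx_col2; ring. Qed.

Lemma det2Z a b u v : det2 (a *: u) (b *: v) = a * b * det2 u v.
Proof. by rewrite /det2 !mxE; ring. Qed.

Definition cross_ratio (f : bool -> bool -> 'cV[C]_2) : C :=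
  det2 (f false false) (f false true) * det2 (f true false) (f true true)
  / (det2 (f false false) (f true true) * det2 (f true false) (f false true)).

Lemma cross_ratio_image K (f g : bool -> bool -> 'cV[C]_2)
    (mu : bool -> bool -> C) :
  (forall a x, mu a x != 0) -> (forall a x, K *m f a x = mu a x *: g a x) ->
  det2 (g false false) (g true true) * det2 (g true false) (g false true) != 0 ->
  cross_ratio f = cross_ratio g.
Proof.
move=> mu_neq0 Kf; rewrite mulf_eq0 negb_or => /andP[g14_neq0 g23_neq0].
have detE a x b y :
    \det K * det2 (f a x) (f b y) = mu a x * mu b y * det2 (g a x) (g b y).
  by rewrite -det2_mul !Kf det2Z.
have detK_neq0 : \det K != 0.
  have mu14_neq0 := mulf_neq0 (mu_neq0 false false) (mu_neq0 true true).
  have := mulf_neq0 mu14_neq0 g14_neq0.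
  by rewrite -detE mulf_eq0 negb_or => /andP[].
have fE a x b y :
    det2 (f a x) (f b y) = mu a x * mu b y * det2 (g a x) (g b y) / \det K.
  by rewrite -detE mulrC mulKf.
rewrite /cross_ratio !fE; field.
by rewrite g14_neq0 g23_neq0 detK_neq0 !mu_neq0.
Qed.

Section TargetAssemblage.
Variables c s : C.
Hypotheses (c_gt0 : 0 < c) (s_gt0 : 0 < s) (cs1 : c ^+ 2 + s ^+ 2 = 1).

Definition target_vec (af xf : bool) : 'cV[C]_2 :=
  if xf then rot_basis c s af else rot_basis 1 0 af.

Definition target (af xf : bool) : 'M[C]_2 := 2^-1 *: proj (target_vec af xf).

Let c_real : c \is Num.real := gtr0_real c_gt0.
Let s_real : s \is Num.real := gtr0_real s_gt0.
Let c_neq0 : c != 0 := lt0r_neq0 c_gt0.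
Let s_neq0 : s != 0 := lt0r_neq0 s_gt0.
Let unit_1_0 : 1 ^+ 2 + 0 ^+ 2 = 1 :> C.
Proof. by rewrite expr1n expr0n addr0. Qed.

Lemma target_vec_orthonormal af bf xf :
  dotv (target_vec af xf) (target_vec bf xf) = (af == bf)%:R.
Proof. by case: xf; apply: rot_basis_orthonormal; rewrite ?rpred0 ?rpred1. Qed.

Lemma target_vec_complete af xf :
  proj (target_vec af xf) + proj (target_vec (~~ af) xf) = 1%:M.
Proof.
suff complete : proj (target_vec false xf) + proj (target_vec true xf) = 1%:M.
  by case: af; [rewrite addrC | ].
by case: xf; apply: rot_basis_complete; rewrite ?rpred0 ?rpred1.
Qed.

Lemma target_vec_overlap_neq0 af bf xf :
  dotv (target_vec af xf) (target_vec bf (~~ xf)) != 0.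
Proof.
case: xf; rewrite /= ?(dotvC (target_vec _ true)) ?conjC_eq0;
  case: af; case: bf; rewrite /target_vec /rot_basis /= dotv_ket
    !conj_Creal ?rpredN ?rpred0 ?rpred1 //;
  by rewrite ?(mul0r, mul1r, mulr0, mulr1, add0r, addr0, oppr0, oppr_eq0).
Qed.

Lemma target_sum xf : \sum_af target af xf = 2^-1 *: 1%:M.
Proof.
by rewrite /target -scaler_sumr big_bool /= (target_vec_complete true).
Qed.

Lemma target_assemblage : min_qubit_assemblage target.
Proof.
have half_ge0 : 0 <= 2^-1 :> C by rewrite invr_ge0 ler0n.
split; [|split].
- by move=> af xf; apply: psdZ half_ge0 (psd_proj _).
- by move=> xf xf'; rewrite !target_sum.
- move=> xf; split.
    by apply: psd_sum => af; apply: psdZ half_ge0 (psd_proj _).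
  by rewrite target_sum mxtraceZ mxtrace1 mulVf // pnatr_eq0.
Qed.

Lemma det2_target_vec_neq0 :
  det2 (target_vec false false) (target_vec true true) *
  det2 (target_vec true false) (target_vec false true) != 0.
Proof.
rewrite /det2 !mxE /= ?(mul0r, mul1r, mulNr, subr0, sub0r, oppr0).
by rewrite mulf_neq0 ?oppr_eq0.
Qed.

Lemma cross_ratio_target_vec : cross_ratio target_vec = - (s / c) ^+ 2.
Proof. by rewrite /cross_ratio /det2 !mxE /=; field. Qed.

End TargetAssemblage.

Lemma sum_prob_mul_const (I : finType) (p p' h : I -> C) :
  \sum_i p i = 1 -> \sum_i p' i = 1 -> (forall i j, h i = h j) ->
  \sum_i p i * h i = \sum_i p' i * h i.
Proof.
move=> p1 p'1 h_const.
have -> : \sum_i p i * h i = \sum_i \sum_j p i * p' j * h j.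
  apply: eq_bigr => i _; rewrite -[LHS]mulr1 -p'1 mulr_sumr.
  by apply: eq_bigr => j _; rewrite (h_const j i) mulrAC.
rewrite exchange_big; apply: eq_bigr => j _.
by rewrite -!mulr_suml p1 mul1r.
Qed.

Lemma sum_bool_delta (F : bool -> C) a :
  \sum_b F b * `|(a == b)%:R| ^+ 2 = F a.
Proof.
by case: a; rewrite big_bool /= normr0 normr1 expr0n expr1n mulr0 mulr1 ?addr0 ?add0r.
Qed.

Section OneWayLOCC.
Variables (X A W : finType) (P : X -> A -> C) (psi : A -> X -> 'cV[C]_2).
Variables (K : W -> 'M[C]_2) (Pre : W * bool -> X -> C)
  (Post : A * X * W * bool -> bool -> C).
Hypotheses (Hpure : pure_DI_assemblage P psi)
  (HPre : cond_prob Pre) (HPost : cond_prob Post).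

Definition locc_weight w a x af xf : C :=
  Pre (w, xf) x * Post (a, x, w, xf) af * P x a.

Definition branch_form u w af xf : C :=
  \sum_a \sum_x locc_weight w a x af xf * `|dotv u (K w *m psi a x)| ^+ 2.

Lemma locc_weight_ge0 w a x af xf : 0 <= locc_weight w a x af xf.
Proof.
by rewrite !mulr_ge0 //; [apply: HPre.1 | apply: HPost.1 | apply: Hpure.1.1].
Qed.

Lemma branch_form_term_ge0 u w a x af xf :
  0 <= locc_weight w a x af xf * `|dotv u (K w *m psi a x)| ^+ 2.
Proof. by rewrite mulr_ge0 ?locc_weight_ge0 ?exprn_ge0. Qed.

Lemma branch_form_ge0 u w af xf : 0 <= branch_form u w af xf.
Proof.
by apply: sumr_ge0 => a _; apply: sumr_ge0 => x _; apply: branch_form_term_ge0.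
Qed.

Lemma form_LOCC_image u af xf :
  form u (one_way_LOCC_image P psi K Pre Post af xf) =
  \sum_w branch_form u w af xf.
Proof.
rewrite /one_way_LOCC_image form_sum.
under eq_bigr do rewrite form_sum.
under eq_bigr do under eq_bigr do rewrite form_sum.
under eq_bigr do under eq_bigr do under eq_bigr do
  rewrite formZ mulmx_proj form_proj.
by under eq_bigr do rewrite exchange_big; rewrite exchange_big.
Qed.

Lemma branch_form_no_signalling u w xf xf' :
  \sum_af branch_form u w af xf = \sum_af branch_form u w af xf'.
Proof.
pose h x := form (adj (K w) *m u) (\sum_a P x a *: proj (psi a x)).
have branch_sumE xf0 :
    \sum_af branch_form u w af xf0 = \sum_x Pre (w, xf0) x * h x.
  rewrite exchange_big; under eq_bigr do rewrite exchange_big.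
  rewrite exchange_big; apply: eq_bigr => x _.
  rewrite /h form_sum mulr_sumr; apply: eq_bigr => a _.
  rewrite formZ form_proj -dotv_mul -mulr_suml /locc_weight.
  by rewrite -mulr_suml -mulr_sumr HPost.2 mulr1 mulrA.
rewrite !branch_sumE.
apply: sum_prob_mul_const (HPre.2 (w, xf)) (HPre.2 (w, xf')) _ => x x'.
by rewrite /h (Hpure.2.2 x x').
Qed.

Lemma branch_form_eq0 u w a x af xf :
  branch_form u w af xf = 0 -> locc_weight w a x af xf != 0 ->
  dotv u (K w *m psi a x) = 0.
Proof.
have term_ge0 a' x' := branch_form_term_ge0 u w a' x' af xf.
move/(psumr_eq0P (fun a _ => sumr_ge0 _ (fun x _ => term_ge0 a x)))/(_ a isT).
move/(psumr_eq0P (fun x _ => term_ge0 a x))/(_ x isT).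
by move=> /eqP; rewrite mulf_eq0 expf_eq0 normr_eq0 /= => /orP[-> | /eqP].
Qed.

Section ReachingTarget.
Variables c s : C.
Hypotheses (c_gt0 : 0 < c) (s_gt0 : 0 < s) (cs1 : c ^+ 2 + s ^+ 2 = 1).
Hypothesis Himg :
  forall af xf, one_way_LOCC_image P psi K Pre Post af xf = target c s af xf.

Let tv := target_vec c s.

Lemma locc_support_target w a x af xf : locc_weight w a x af xf != 0 ->
  K w *m psi a x = dotv (tv af xf) (K w *m psi a x) *: tv af xf.
Proof.
move=> weight_neq0.
apply: (orthonormal_expansion (u' := tv (~~ af) xf)).
  exact: target_vec_complete.
have orth : (~~ af == af) = false by case: (af).
have : form (tv (~~ af) xf) (target c s af xf) = 0.
  by rewrite formZ form_proj target_vec_orthonormal // orth normr0 expr0n mulr0.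
rewrite -Himg form_LOCC_image.
move/(psumr_eq0P (fun w _ => branch_form_ge0 _ w af xf)).
by move/(_ w isT)/branch_form_eq0; apply.
Qed.

Definition branch_weight w af xf : C := branch_form (tv af xf) w af xf.

Lemma branch_formE u w af xf :
  branch_form u w af xf = branch_weight w af xf * `|dotv u (tv af xf)| ^+ 2.
Proof.
rewrite /branch_weight /branch_form mulr_suml; apply: eq_bigr => a _.
rewrite mulr_suml; apply: eq_bigr => x _.
have [-> | weight_neq0] := eqVneq (locc_weight w a x af xf) 0.
  by rewrite -mulrA !mul0r.
by rewrite {1}(locc_support_target weight_neq0) dotvZ normrM exprMn mulrA.
Qed.

Lemma branch_weight_balance w af xf :
  branch_weight w af xf =
  \sum_bf branch_weight w bf (~~ xf) * `|dotv (tv af xf) (tv bf (~~ xf))| ^+ 2.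
Proof.
transitivity (\sum_bf branch_form (tv af xf) w bf (~~ xf)).
  rewrite -(branch_form_no_signalling _ _ xf).
  under eq_bigr do rewrite branch_formE target_vec_orthonormal //.
  by rewrite sum_bool_delta.
by apply: eq_bigr => bf _; rewrite branch_formE.
Qed.

Lemma branch_weight_ge0 w af xf : 0 <= branch_weight w af xf.
Proof. exact: branch_form_ge0. Qed.

Lemma branch_weight_spread w bf xf :
  0 < branch_weight w bf (~~ xf) -> forall af, 0 < branch_weight w af xf.
Proof.
move=> w_gt0 af; rewrite branch_weight_balance (bigD1 bf) //=.
apply: ltr_pwDl.
  by rewrite mulr_gt0 // exprn_gt0 // normr_gt0 target_vec_overlap_neq0.
by rewrite sumr_ge0 // => bf' _; rewrite mulr_ge0 ?branch_weight_ge0 ?exprn_ge0.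
Qed.

Lemma branch_weight_pos : exists w, forall af xf, 0 < branch_weight w af xf.
Proof.
have sum_neq0 : \sum_w branch_weight w false false <> 0.
  rewrite /branch_weight -form_LOCC_image Himg formZ form_proj.
  rewrite target_vec_orthonormal // normr1 expr1n mulr1.
  by apply/eqP; rewrite invr_eq0 pnatr_eq0.
have [w /andP[_ w_gt0]] :=
  psumr_neq0P (fun w _ => branch_weight_ge0 w false false) sum_neq0.
have pos_true af : 0 < branch_weight w af true.
  exact: (branch_weight_spread (xf := true) w_gt0).
exists w => af [|]; first exact: pos_true.
exact: (branch_weight_spread (xf := false) (pos_true false)).
Qed.

Lemma branch_weight_support w af xf : 0 < branch_weight w af xf ->
  exists ax : A * X, exists2 mu, mu != 0 & K w *m psi ax.1 ax.2 = mu *: tv af xf.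
Proof.
have term_ge0 a' x' := branch_form_term_ge0 (tv af xf) w a' x' af xf.
move=> /lt0r_neq0/eqP.
move/(psumr_neq0P (fun a _ => sumr_ge0 _ (fun x _ => term_ge0 a x))).
move=> [a /andP[_ /lt0r_neq0/eqP]].
move/(psumr_neq0P (fun x _ => term_ge0 a x)) => [x /andP[_ term_gt0]].
have := lt0r_neq0 term_gt0; rewrite mulf_eq0 negb_or expf_eq0 normr_eq0 /=.
move=> /andP[weight_neq0 mu_neq0].
exists (a, x), (dotv (tv af xf) (K w *m psi a x)) => //.
exact: locc_support_target.
Qed.

Lemma LOCC_target_cross_ratio :
  exists g : {ffun bool * bool -> A * X},
    cross_ratio (fun af xf => psi (g (af, xf)).1 (g (af, xf)).2) = - (s / c) ^+ 2.
Proof.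
have [w w_pos] := branch_weight_pos.
have /fin_all_exists [g g_support] : forall i : bool * bool, exists ax : A * X,
    exists2 mu, mu != 0 & K w *m psi ax.1 ax.2 = mu *: tv i.1 i.2.
  by move=> i; apply: branch_weight_support.
have /fin_all_exists2 [mu mu_neq0 K_psi] := g_support.
exists [ffun i => g i]; rewrite -cross_ratio_target_vec //.
apply: (@cross_ratio_image (K w) _ _ (fun af xf => mu (af, xf))).
- by move=> af xf; apply: mu_neq0.
- by move=> af xf; rewrite ffunE K_psi.
- exact: det2_target_vec_neq0.
Qed.

End ReachingTarget.
End OneWayLOCC.

Lemma reachable_target_cross_ratio (X A : finType) (P : X -> A -> C)
    (psi : A -> X -> 'cV[C]_2) (c s : C) :
  0 < c -> 0 < s -> c ^+ 2 + s ^+ 2 = 1 -> pure_DI_assemblage P psi ->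
  LOCC_reachable P psi (target c s) ->
  exists g : {ffun bool * bool -> A * X},
    cross_ratio (fun af xf => psi (g (af, xf)).1 (g (af, xf)).2) = - (s / c) ^+ 2.
Proof.
move=> c_gt0 s_gt0 cs1 Hpure [W [K [Pre [Post [_ [HPre [HPost Himg]]]]]]].
exact: (LOCC_target_cross_ratio Hpure HPre HPost c_gt0 s_gt0 cs1 Himg).
Qed.

Lemma unit_circle_ratio (t : C) : 0 < t ->
  exists c s : C, [/\ 0 < c, 0 < s, c ^+ 2 + s ^+ 2 = 1 & s / c = t].
Proof.
move=> t_gt0.
have norm_gt0 : 0 < 1 + t ^+ 2 by rewrite addr_gt0 ?ltr01 ?exprn_gt0.
have c_gt0 : 0 < sqrtC (1 + t ^+ 2)^-1 by rewrite sqrtC_gt0 invr_gt0.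
exists (sqrtC (1 + t ^+ 2)^-1), (t * sqrtC (1 + t ^+ 2)^-1).
split; rewrite ?mulr_gt0 ?mulfK ?lt0r_neq0 //.
by rewrite exprMn sqrtCK; field; rewrite lt0r_neq0.
Qed.

Lemma inj_seq_not_in_codom (T : finType) (U : eqType) (g : T -> U)
    (f : nat -> U) :
  injective f -> ~ (forall n, f n \in codom g).
Proof.
move=> f_inj f_in_codom.
have sub : {subset map f (iota 0 #|T|.+1) <= codom g}.
  by move=> _ /mapP[n _ ->]; apply: f_in_codom.
have uniq_f : uniq (map f (iota 0 #|T|.+1)).
  by rewrite map_inj_uniq // iota_uniq.
have := uniq_leq_size uniq_f sub.
by rewrite size_map size_iota size_codom ltnn.
Qed.

Unset Implicit Arguments.

Theorem theoremS2 (N : nat) (hN : (2 <= N)%N)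
  (mx ma : 'I_(N.-1) -> nat)
  (P : inputs mx -> outputs ma -> C) (psi : outputs ma -> inputs mx -> 'cV[C]_2) :
  pure_DI_assemblage P psi ->
  ~ (forall sigma : bool -> bool -> 'M[C]_2,
       min_qubit_assemblage sigma -> LOCC_reachable P psi sigma).
Proof.
move=> Hpure Hall.
pose cr (g : {ffun bool * bool -> outputs ma * inputs mx}) :=
  cross_ratio (fun af xf => psi (g (af, xf)).1 (g (af, xf)).2).
have sqr_inj : injective (fun n : nat => - n.+1%:R ^+ 2 : C).
  by move=> m n /oppr_inj/eqP; rewrite eqrXn2 ?ler0n // eqr_nat eqSS => /eqP.
apply: (inj_seq_not_in_codom (g := cr) sqr_inj) => n /=.
have [c [s [c_gt0 s_gt0 cs1 <-]]] := unit_circle_ratio (ltr0Sn C n).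
have [g cr_g] := reachable_target_cross_ratio c_gt0 s_gt0 cs1 Hpure
  (Hall _ (target_assemblage c_gt0 s_gt0 cs1)).
by apply/codomP; exists g.
Qed.
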